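(* Let $N$ and $M$ be large positive parameters, let $\mathcal{X}$ be any subset of $\{1,2,\ldots,10^M\}$, and let $\Delta=\Delta(N)$ be any function with $\Delta\to\infty$. Then for $\pi(N)\bigl(1+O(1/\Delta)\bigr)$ primes $p\le N$ we have $$\#\{x \bmod p \;:\; x\in\mathcal{X}\}=|\mathcal{X}|+O\!\left(\frac{|\mathcal{X}|}{1+\frac{\pi(N)\log M}{M|\mathcal{X}|\Delta}}\right).$$ That is, the number of primes $p\le N$ for which this estimate holds (with an absolute implied constant) is $\pi(N)(1+O(1/\Delta))$.
   Context: $\pi(N)$ denotes the number of primes $p\le N$. $\#\{x \bmod p : x\in\mathcal{X}\}$ is the number of distinct residues modulo $p$ of elements of $\mathcal{X}$. *)

From Stdlib Require Import Reals.
From mathcomp Require Import all_boot.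

Definition prime_pi (N : nat) : nat := count prime (iota 0 N.+1).

Definition num_residues (p : nat) (X : seq nat) : nat :=
  size (undup (map (fun x => x %% p) X)).

Definition subset_upto (M : nat) (X : seq nat) : bool :=
  uniq X && all (fun x => (1 <= x) && (x <= 10 ^ M)) X.

Local Open Scope R_scope.

Definition err_term (N M : nat) (X : seq nat) (Delta : R) : R :=
  (INR (size X) / (1 + INR (prime_pi N) * ln (INR M) / (INR M * INR (size X) * Delta))).

Definition good_primes (C : R) (N M : nat) (X : seq nat) (Delta : R) : seq nat :=
  [seq p <- iota 0 N.+1 | prime p &
     (if Rle_dec (Rabs (INR (num_residues p X) - INR (size X))) (C * err_term N M X Delta)
      then true else false)].

(* For a prime p, |X| minus the number of residues of X mod p is at most the number of
   pairs x <> y in X with p | x - y.  A nonzero integer below 10 ^ M has at most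
   s + log_s (10 ^ M) = O(M / log M) prime divisors (take s ~ sqrt M), so these collision counts,
   summed over all primes p <= N, total O(|X|^2 M / log M).  A prime at which the estimate fails
   with constant 2 carries more than |X|^2 M Delta / (pi(N) log M) collisions, so by Markov's
   inequality there are O(pi(N) / Delta) such primes. *)

From Stdlib Require Import Reals Lra Lia.
From mathcomp Require Import all_boot zify.

Set Implicit Arguments.
Unset Strict Implicit.
Unset Printing Implicit Defensive.

Fixpoint collisions (p : nat) (X : seq nat) : nat :=
  if X is x :: s then count (fun y => x == y %[mod p]) s + collisions p s else 0.

Lemma num_residues_le_size p X : num_residues p X <= size X.
Proof. by rewrite /num_residues (leq_trans (size_undup _)) // size_map. Qed.

Lemma size_le_num_residues_collisions p X :
  size X <= num_residues p X + collisions p X.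
Proof.
rewrite /num_residues; elim: X => [|x s IH] //=.
case: ifP => [/mapP [y ys exy]|_] /=.
  have c_gt0 : 0 < count (fun z => x == z %[mod p]) s.
    by rewrite -has_count; apply/hasP; exists y => //; rewrite exy.
  by rewrite addnCA; apply: leq_ltn_trans IH _; rewrite -[X in X < _]add0n ltn_add2r.
by rewrite addSn ltnS (leq_trans IH) ?leq_add2l ?leq_addl.
Qed.

Lemma prod_uniq_primes_dvd (L : seq nat) d :
  uniq L -> all prime L -> all (dvdn^~ d) L -> \prod_(p <- L) p %| d.
Proof.
elim: L => [|p L IH] /=; first by rewrite big_nil dvd1n.
case/andP=> pL uL /andP [pp primeL] /andP [pd dvdL].
rewrite big_cons Gauss_dvd ?pd ?IH // prime_coprime // Euclid_dvd_prod // big_has.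
apply/hasPn=> q qL; rewrite dvdn_prime2 ?(allP primeL q qL) //.
by apply: contraNneq pL => ->.
Qed.

Lemma leq_expn_size_prod s (L : seq nat) : all (leq s) L -> s ^ size L <= \prod_(p <- L) p.
Proof.
elim: L => [|p L IH] /=; first by rewrite big_nil.
by case/andP=> sp sL; rewrite big_cons expnS leq_mul // IH.
Qed.

(* The primes below s number at most s; those above s have a product >= s ^ k dividing d. *)
Lemma count_prime_divisors_le (r : seq nat) s d :
  uniq r -> all prime r -> 1 < s -> 0 < d -> count (fun p => p %| d) r <= s + trunc_log s d.
Proof.
move=> ur primer s_gt1 d_gt0.
rewrite -size_filter -(count_predC (fun p => p < s)) !count_filter leq_add //.
  rewrite -size_filter -[s in _ <= s](size_iota 0) uniq_leq_size ?filter_uniq //.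
  by move=> p; rewrite mem_filter mem_iota => /andP [/andP [/= ->]].
rewrite -size_filter; set L := filter _ r.
have inL p : p \in L -> [/\ s <= p, prime p & p %| d].
  rewrite mem_filter => /andP [/andP [/= + ->] /(allP primer) ->].
  by rewrite -leqNgt.
apply: trunc_log_max => //.
have sL : all (leq s) L by apply/allP=> p /inL [].
have primeL : all prime L by apply/allP=> p /inL [].
have dvdL : all (dvdn^~ d) L by apply/allP=> p /inL [].
apply: leq_trans (leq_expn_size_prod sL) (dvdn_leq d_gt0 _).
by apply: prod_uniq_primes_dvd; rewrite ?filter_uniq.
Qed.

Lemma count_eqmod_primes_le (r : seq nat) s D x y :
  uniq r -> all prime r -> 1 < s -> x != y -> 0 < x <= D -> 0 < y <= D ->
  count (fun p => x == y %[mod p]) r <= s + trunc_log s D.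
Proof.
move=> ur primer s_gt1 xy hx hy.
wlog lt_yx : x y xy hx hy / y < x => [sym|].
  case: (ltngtP y x) => [lt_yx|lt_xy|eq_yx]; first exact: sym.
    rewrite (eq_count (a2 := fun p => y == x %[mod p])) => [|p].
      by apply: sym; rewrite // eq_sym.
    by rewrite eq_sym.
  by rewrite eq_yx eqxx in xy.
rewrite (eq_count (a2 := fun p => p %| x - y)) => [|p]; last by rewrite eqn_mod_dvd // ltnW.
apply: leq_trans (count_prime_divisors_le (d := x - y) ur primer s_gt1 _) _.
  by rewrite subn_gt0.
by rewrite leq_add2l leq_trunc_log // (leq_trans (leq_subr _ _)) //; case/andP: hx.
Qed.

Lemma sum_nat_of_bool_count (T : Type) (r : seq T) (b : pred T) :
  \sum_(i <- r) (b i : nat) = count b r.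
Proof. by rewrite -sum1_count [RHS]big_mkcond. Qed.

Lemma sum_collisions_le (r : seq nat) s D X :
  uniq r -> all prime r -> 1 < s -> uniq X -> all (fun x => 0 < x <= D) X ->
  \sum_(p <- r) collisions p X <= size X * size X * (s + trunc_log s D).
Proof.
move=> ur primer s_gt1; elim: X => [|x S IH] /=; first by rewrite big1.
case/andP=> xS uS /andP [hx hS]; rewrite big_split /=.
have pairs : \sum_(p <- r) count (fun y => x == y %[mod p]) S <= size S * (s + trunc_log s D).
  elim: S xS hS {IH uS} => [|y S IHS] /=; first by rewrite big1.
  rewrite inE negb_or => /andP [xy xS] /andP [hy hS].
  rewrite big_split /= mulSn leq_add ?IHS // sum_nat_of_bool_count.
  exact: count_eqmod_primes_le.
apply: leq_trans (leq_add pairs (IH uS hS)) _.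
by rewrite -mulnDl leq_mul2r mulSn mulnS leq_addl orbT.
Qed.

Lemma sqrtn_bounds M : 4 <= M ->
  1 < Nat.sqrt M /\ Nat.sqrt M * Nat.sqrt M <= M <= Nat.sqrt M ^ 4.
Proof.
move=> M_ge4; have [/leP lo /ltP hi] := Nat.sqrt_spec' M.
move: (Nat.sqrt M) lo hi; rewrite !multE => s lo hi.
have -> : s ^ 4 = s * s * (s * s) by rewrite !expnS expn0 !mulnA muln1.
have s_gt1 : 1 < s.
  rewrite ltnNge; apply/negP => s_le1.
  by have := leq_mul s_le1 s_le1; lia.
by split; [|apply/andP; split]; nia.
Qed.

Open Scope R_scope.

Lemma INR_expn b k : INR (b ^ k)%N = INR b ^ k.
Proof. by elim: k => [|k IH] //=; rewrite expnS mult_INR IH. Qed.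

Lemma ln_le_compat x y : 0 < x -> x <= y -> ln x <= ln y.
Proof. by move=> x_pos [lt_xy|->]; [left; apply: ln_increasing | right]. Qed.

Lemma ln_le_sub_1 x : 0 < x -> ln x <= x - 1.
Proof. by move=> x_pos; rewrite -{2}(exp_ln x x_pos); have := exp_ineq1_le (ln x); lra. Qed.

Lemma trunc_log_mul_ln_le b n : (1 < b)%N -> (0 < n)%N ->
  INR (trunc_log b n) * ln (INR b) <= ln (INR n).
Proof.
move=> b_gt1 n_gt0.
have b_pos : 0 < INR b by apply: lt_0_INR; apply/ltP; lia.
rewrite -ln_pow //; apply: ln_le_compat; first exact: pow_lt.
by rewrite -INR_expn; apply: le_INR; apply/leP; apply: trunc_logP.
Qed.

(* With s ~ sqrt M, an integer below 10 ^ M has at most s + log_s (10 ^ M) = O(M / log M)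
   prime divisors. *)
Lemma prime_divisor_bound_mul_ln_le s M : (1 < s)%N -> (s * s <= M <= s ^ 4)%N ->
  INR (s + trunc_log s (10 ^ M)) * ln (INR M) <= 40 * INR M.
Proof.
move=> s_gt1 /andP [sM Ms].
have s_ge2 : 2 <= INR s by rewrite (_ : 2 = INR 2) //; apply: le_INR; apply/leP.
have s2M : INR s * INR s <= INR M by rewrite -mult_INR; apply: le_INR; apply/leP.
have M_pos : 0 < INR M by nra.
have ln_s_pos : 0 < ln (INR s) by rewrite -ln_1; apply: ln_increasing; lra.
have ln_s_le : ln (INR s) <= INR s by have := ln_le_sub_1 (x := INR s); lra.
have ln_M_le : ln (INR M) <= 4 * ln (INR s).
  rewrite (_ : 4 * ln (INR s) = ln (INR s ^ 4)); last by rewrite ln_pow /=; lra.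
  by apply: ln_le_compat => //; rewrite -INR_expn; apply: le_INR; apply/leP.
have tl_ln : INR (trunc_log s (10 ^ M)) * ln (INR s) <= INR M * ln (INR 10).
  apply: Rle_trans (trunc_log_mul_ln_le s_gt1 _) _; first by rewrite expn_gt0.
  by rewrite INR_expn ln_pow; [apply: Rle_refl | simpl; lra].
have ln10 : ln (INR 10) <= 9 by have := ln_le_sub_1 (x := INR 10); simpl; lra.
have tl_pos := pos_INR (trunc_log s (10 ^ M)).
rewrite plus_INR; nra.
Qed.

(* Writing t = 1 + A / Q with Q = m n d, the hypothesis reads g > 2 n / t; as g <= n this forces
   t > 2, and then c >= g > 2 n / t >= n / (t - 1), i.e. n Q < c A. *)
Lemma gap_gt_err_term (n g c m d A : R) : 0 <= g <= n -> g <= c -> 0 < m -> 0 < d -> 0 <= A ->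
  2 * (n / (1 + A / (m * n * d))) < g -> 0 < n /\ n * (m * n * d) < c * A.
Proof.
move=> [g_ge0 g_le_n] g_le_c m_pos d_pos A_ge0 gap.
have n_pos : 0 < n.
  case: (Req_dec n 0) => [n0|]; last lra.
  by move: gap; rewrite n0 /Rdiv !Rmult_0_l Rmult_0_r; lra.
split=> //.
set Q := m * n * d in gap *.
have Q_pos : 0 < Q by rewrite /Q; apply: Rmult_lt_0_compat => //; apply: Rmult_lt_0_compat.
set t := 1 + A / Q in gap.
have t_ge1 : 1 <= t.
  rewrite /t; have : 0 <= A / Q by apply: Rmult_le_pos => //; apply/Rlt_le/Rinv_0_lt_compat.
  lra.
have A_eq : A = Q * (t - 1) by rewrite /t; field; lra.
set u := n / t in gap.
have n_eq : n = u * t by rewrite /u; field; lra.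
have u_pos : 0 < u by rewrite /u; apply: Rdiv_lt_0_compat; lra.
have t_gt2 : 2 < t by nra.
rewrite A_eq {1}n_eq; nra.
Qed.

Lemma size_mul_le_sum_mul (B : seq nat) (f : nat -> nat) (T A : R) :
  (forall p, p \in B -> T < INR (f p) * A) ->
  INR (size B) * T <= INR (\sum_(p <- B) f p) * A.
Proof.
elim: B => [|p B IH] bound; first by rewrite big_nil /=; lra.
rewrite big_cons plus_INR [size _]/= S_INR.
have := bound p (mem_head _ _).
have := IH (fun q qB => bound q (mem_behead (s := p :: B) qB)).
lra.
Qed.

Definition primes_upto (N : nat) : seq nat := [seq p <- iota 0 N.+1 | prime p].

Definition estimate_holds (C : R) (N M : nat) (X : seq nat) (Delta : R) (p : nat) : bool :=
  if Rle_dec (Rabs (INR (num_residues p X) - INR (size X))) (C * err_term N M X Delta)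
  then true else false.

Lemma good_primesE C N M X Delta :
  good_primes C N M X Delta = [seq p <- primes_upto N | estimate_holds C N M X Delta p].
Proof. by rewrite /good_primes -filter_predI; apply: eq_filter => p; rewrite andbC. Qed.

Lemma size_primes_upto N : size (primes_upto N) = prime_pi N.
Proof. exact: size_filter. Qed.

(* Each failing prime p forces collisions p X >> |X|^2 M Delta / (pi(N) log M), whereas their
   total over all primes is at most |X|^2 times the bound on the number of prime divisors. *)
Lemma size_failing_primes_le N M X Delta : (4 <= M)%N -> subset_upto M X -> 1 <= Delta ->
  INR (size [seq p <- primes_upto N | ~~ estimate_holds 2 N M X Delta p]) * Delta
  <= 40 * INR (prime_pi N).
Proof.
move=> M_ge4 /andP [uX rangeX] Delta_ge1.
have [s_gt1 sM] := sqrtn_bounds M_ge4.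
have W_ln := prime_divisor_bound_mul_ln_le s_gt1 sM.
set s := Nat.sqrt M in s_gt1 W_ln.
set W := (s + trunc_log s (10 ^ M))%N in W_ln.
set B := [seq p <- _ | _].
have uB : uniq B by rewrite !filter_uniq ?iota_uniq.
have primeB : all prime B by apply/allP=> p; rewrite !mem_filter => /and3P [].
set n := INR (size X); set m := INR M; set pi := INR (prime_pi N).
set A := pi * ln m.
have m_ge4 : 4 <= m by rewrite /m (_ : 4 = INR 4); [apply: le_INR; apply/leP | simpl; lra].
have ln_m_pos : 0 < ln m by rewrite -ln_1; apply: ln_increasing; lra.
have pi_ge0 : 0 <= pi by apply: pos_INR.
have failing p : p \in B -> 0 < n /\ n * (m * n * Delta) < INR (collisions p X) * A.
  rewrite mem_filter /estimate_holds => /andP [+ _]; case: Rle_dec => // fail _.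
  have r_le_n : INR (num_residues p X) <= n.
    by apply: le_INR; apply/leP; apply: num_residues_le_size.
  have n_le : n <= INR (num_residues p X) + INR (collisions p X).
    by rewrite -plus_INR; apply: le_INR; apply/leP; apply: size_le_num_residues_collisions.
  rewrite /err_term -/n -/m -/pi -/A Rabs_minus_sym Rabs_pos_eq in fail; last lra.
  have r_ge0 := pos_INR (num_residues p X).
  by apply: gap_gt_err_term (Rnot_le_lt _ _ fail); rewrite /A; nra.
case: B failing uB primeB => [|p B'] failing uB primeB; first by rewrite /= Rmult_0_l; lra.
have [n_pos _] := failing p (mem_head _ _).
have markov := size_mul_le_sum_mul (fun q qB => proj2 (failing q qB)).
have sum_le : INR (\sum_(q <- p :: B') collisions q X) <= n * n * INR W.
  rewrite /n -!mult_INR; apply: le_INR; apply/leP.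
  exact: sum_collisions_le.
have A_ge0 : 0 <= A by apply: Rmult_le_pos => //; lra.
have sumA := Rmult_le_compat_r _ _ _ A_ge0 sum_le.
have nnWA : n * n * INR W * A <= n * n * (40 * m) * pi.
  have nn_pi : 0 <= n * n * pi by apply: Rmult_le_pos => //; nra.
  by have := Rmult_le_compat_l _ _ _ nn_pi W_ln; rewrite /A /m; lra.
apply: (Rmult_le_reg_r (n * n * m)); first by apply: Rmult_lt_0_compat; nra.
lra.
Qed.

Theorem theorem2 :
  exists (C1 C2 : R) (N0 M0 : nat), 0 < C1 /\ 0 < C2 /\
    forall (N M : nat) (X : seq nat) (Delta : R),
      (N0 <= N)%N -> (M0 <= M)%N -> subset_upto M X -> 1 <= Delta ->
      INR (size (good_primes C1 N M X Delta)) >= INR (prime_pi N) * (1 - C2 / Delta).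
Proof.
exists 2, 40, 0%N, 4%N; split; first lra; split; first lra.
move=> N M X Delta _ M_ge4 hX Delta_ge1.
have failing := size_failing_primes_le N M_ge4 hX Delta_ge1.
set good := good_primes _ _ _ _ _; set bad := [seq p <- _ | _] in failing.
have split_primes : INR (size good) + INR (size bad) = INR (prime_pi N).
  by rewrite -plus_INR plusE /good /bad good_primesE !size_filter count_predC size_primes_upto.
have bad_le : INR (size bad) <= 40 * INR (prime_pi N) / Delta.
  by apply: (Rmult_le_reg_r Delta); [lra | rewrite /Rdiv Rmult_assoc Rinv_l; lra].
rewrite /Rdiv in bad_le *; lra.
Qed.
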